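(* Let $f\colon A\to B$ be a group homomorphism and $L=L_f$. Suppose there exist a group $G$ whose localization homomorphism $\eta_G\colon G\to LG$ is not an isomorphism and has $L$-local kernel, and an $L$-local group $E$ with a surjective homomorphism $E\to LG$ such that $\mathrm{Hom}(A,E)=\{1\}=\mathrm{Hom}(B,E)$. Then the pullback $P=E\times_{LG}G$ is $L$-local; in particular $P\to E$ is not the localization homomorphism of $P$, and $L$ is not conditionally flat.
   Context: For a group homomorphism $f\colon A\to B$, a group $M$ is $f$-local ($L$-local) if $\mathrm{Hom}(B,M)\to\mathrm{Hom}(A,M)$ is a bijection; $L=L_f$ assigns to each group $G$ an $f$-local group $LG$ with a natural homomorphism $\eta_G\colon G\to LG$ initial among homomorphisms to $f$-local groups. An extension $1\to N\to E\to Q\to 1$ is $L$-flat if $1\to LN\to LE\to LQ\to 1$ is again short exact; $L$ is conditionally flat if every pullback of an $L$-flat extension along any homomorphism $Q'\to Q$ is $L$-flat. *)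

From Stdlib Require Import Classical FunctionalExtensionality.

Set Implicit Arguments.

Record Grp := MkGrp {
  car :> Type;
  gmul : car -> car -> car;
  ginv : car -> car;
  gone : car;
  gmulA : forall x y z, gmul x (gmul y z) = gmul (gmul x y) z;
  gmul1l : forall x, gmul gone x = x;
  gmul1r : forall x, gmul x gone = x;
  gmulVl : forall x, gmul (ginv x) x = gone;
  gmulVr : forall x, gmul x (ginv x) = gone
}.

Arguments gmul {g} _ _.
Arguments ginv {g} _.
Arguments gone {g}.

Record Hom (G H : Grp) := MkHom {
  hfun :> G -> H;
  hmul : forall x y, hfun (gmul x y) = gmul (hfun x) (hfun y)
}.

Definition injective_hom (G H : Grp) (phi : Hom G H) : Prop :=
  forall x y, phi x = phi y -> x = y.

Definition surjective_hom (G H : Grp) (phi : Hom G H) : Prop :=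
  forall y, exists x, phi x = y.

Definition is_iso (G H : Grp) (phi : Hom G H) : Prop :=
  exists psi : Hom H G, (forall x, psi (phi x) = x) /\ (forall y, phi (psi y) = y).

Definition only_trivial_homs (X M : Grp) : Prop :=
  forall phi : Hom X M, forall x, phi x = gone.

Definition is_kernel (K G H : Grp) (k : Hom K G) (phi : Hom G H) : Prop :=
  injective_hom k /\ forall y, phi y = gone <-> exists x, k x = y.

Definition short_exact (N E Q : Grp) (i : Hom N E) (p : Hom E Q) : Prop :=
  injective_hom i /\ surjective_hom p /\ (forall y, p y = gone <-> exists x, i x = y).

Definition is_local (A B : Grp) (f : Hom A B) (M : Grp) : Prop :=
  (forall phi psi : Hom B M, (forall a, phi (f a) = psi (f a)) -> forall b, phi b = psi b)
  /\ (forall chi : Hom A M, exists phi : Hom B M, forall a, phi (f a) = chi a).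

Definition is_localization (A B : Grp) (f : Hom A B) (G LG : Grp) (eta : Hom G LG) : Prop :=
  is_local f LG /\
  forall M : Grp, is_local f M -> forall g : Hom G M,
    (exists h : Hom LG M, forall x, h (eta x) = g x) /\
    (forall h1 h2 : Hom LG M, (forall x, h1 (eta x) = h2 (eta x)) -> forall y, h1 y = h2 y).

Definition is_pullback (E Q Q' P : Grp) (p : Hom E Q) (g : Hom Q' Q)
    (q1 : Hom P E) (q2 : Hom P Q') : Prop :=
  (forall x, p (q1 x) = g (q2 x)) /\
  forall (X : Grp) (a : Hom X E) (b : Hom X Q'), (forall x, p (a x) = g (b x)) ->
    (exists h : Hom X P, forall x, q1 (h x) = a x /\ q2 (h x) = b x) /\
    (forall h1 h2 : Hom X P,
        (forall x, q1 (h1 x) = a x /\ q2 (h1 x) = b x) ->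
        (forall x, q1 (h2 x) = a x /\ q2 (h2 x) = b x) -> forall x, h1 x = h2 x).

(* A localization functor L = L_f: object part L, unit eta, and morphism part
   Lmap, natural with respect to eta (Lmap is then uniquely determined). *)
Definition is_localization_functor (A B : Grp) (f : Hom A B)
    (L : Grp -> Grp) (eta : forall G : Grp, Hom G (L G))
    (Lmap : forall G H : Grp, Hom G H -> Hom (L G) (L H)) : Prop :=
  (forall G : Grp, is_localization f (eta G)) /\
  (forall (G H : Grp) (phi : Hom G H) (x : G), Lmap G H phi (eta G x) = eta H (phi x)).

Definition L_flat (L : Grp -> Grp) (Lmap : forall G H : Grp, Hom G H -> Hom (L G) (L H))
    (N E Q : Grp) (i : Hom N E) (p : Hom E Q) : Prop :=
  short_exact i p /\ short_exact (Lmap N E i) (Lmap E Q p).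

(* L is conditionally flat: every pullback of an L-flat extension along any
   Q' -> Q is L-flat. The pulled-back extension is 1 -> N -i'-> E' -q2-> Q' -> 1,
   where E' = E x_Q Q' and i' = (i, 1). *)
Definition conditionally_flat (L : Grp -> Grp)
    (Lmap : forall G H : Grp, Hom G H -> Hom (L G) (L H)) : Prop :=
  forall (N E Q : Grp) (i : Hom N E) (p : Hom E Q), L_flat L Lmap i p ->
  forall (Q' : Grp) (g : Hom Q' Q) (E' : Grp) (q1 : Hom E' E) (q2 : Hom E' Q')
         (i' : Hom N E'),
    is_pullback p g q1 q2 ->
    (forall n, q1 (i' n) = i n) -> (forall n, q2 (i' n) = gone) ->
    L_flat L Lmap i' q2.

(* The proof rests on three observations.
   1. Homomorphisms from A or B into P are invisible in E, so they factor through
      the kernel K of eta_G; since K is L-local, P is L-local ([pullback_local]).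
   2. For an arbitrary pullback square, eta_G is injective as soon as every element
      of P lying over 1 in E lies over 1 in G, and surjective as soon as pi and the
      projection P -> E are ([pullback_injective], [pullback_surjective]).
   3. On L-local groups eta is bijective, so L does not change extensions of local
      groups ([local_extension_flat]), and the localization of a sequence
      N -> P -> G with N, P local controls the kernel and image of eta_G
      ([localized_fiber_trivial], [localized_image]).
   If P -> E were a localization it would be bijective (P being local), so 2 would
   make eta_G an isomorphism.  For the second claim, ker pi -> E -> LG is an L-flat
   extension of local groups; if its pullback along eta_G were L-flat, 3 and 2
   would again make eta_G an isomorphism.  Both contradict the hypothesis. *)

From Stdlib Require Import ProofIrrelevance IndefiniteDescription.

Set Implicit Arguments.
Arguments gmulA {g} x y z.
Arguments gmul1l {g} x.
Arguments gmul1r {g} x.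
Arguments gmulVl {g} x.
Arguments gmulVr {g} x.

Section GroupFacts.
Variable G : Grp.

Lemma idempotent_one (u : G) : gmul u u = u -> u = gone.
Proof.
  intro Hu. transitivity (gmul (gmul (ginv u) u) u).
  - now rewrite gmulVl, gmul1l.
  - now rewrite <- gmulA, Hu, gmulVl.
Qed.

Lemma inv_unique (a b : G) : gmul a b = gone -> a = ginv b.
Proof. intro H. rewrite <- (gmul1r a), <- (gmulVr b), gmulA, H. apply gmul1l. Qed.

Lemma eq_of_mul_inv (x y : G) : gmul x (ginv y) = gone -> x = y.
Proof. intro H. rewrite <- (gmul1r x), <- (gmulVl y), gmulA, H. apply gmul1l. Qed.

End GroupFacts.

Lemma hom_one (G H : Grp) (phi : Hom G H) : phi gone = gone.
Proof. apply idempotent_one. now rewrite <- hmul, gmul1l. Qed.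

Lemma hom_inv (G H : Grp) (phi : Hom G H) (x : G) : phi (ginv x) = ginv (phi x).
Proof. apply inv_unique. now rewrite <- hmul, gmulVl, hom_one. Qed.

Definition comp (X Y Z : Grp) (phi : Hom X Y) (psi : Hom Y Z) : Hom X Z.
Proof. refine (MkHom X Z (fun x => psi (phi x)) _). intros. now rewrite !hmul. Defined.

Definition idh (X : Grp) : Hom X X := MkHom X X (fun x => x) (fun x y => eq_refl).

Definition triv (X Y : Grp) : Hom X Y.
Proof. refine (MkHom X Y (fun _ => gone) _). intros. symmetry. apply gmul1l. Defined.

Lemma injective_of_trivial_kernel (G H : Grp) (phi : Hom G H) :
  (forall x, phi x = gone -> x = gone) -> injective_hom phi.
Proof.
  intros Hk x y Hxy. apply eq_of_mul_inv, Hk.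
  rewrite hmul, hom_inv, Hxy. apply gmulVr.
Qed.

Lemma bijective_is_iso (G H : Grp) (phi : Hom G H) :
  injective_hom phi -> surjective_hom phi -> is_iso phi.
Proof.
  intros Hi Hs.
  assert (C : forall y, {x | phi x = y})
    by (intro y; apply constructive_indefinite_description, Hs).
  assert (Hm : forall y1 y2,
    proj1_sig (C (gmul y1 y2)) = gmul (proj1_sig (C y1)) (proj1_sig (C y2))).
  { intros. apply Hi. now rewrite hmul, !(proj2_sig (C _)). }
  exists (MkHom H G (fun y => proj1_sig (C y)) Hm). simpl. split.
  - intro x. apply Hi, (proj2_sig (C _)).
  - intro y. apply (proj2_sig (C _)).
Qed.

Lemma no_homs_comp (X P E : Grp) (HX : only_trivial_homs X E)
  (c : Hom X P) (p : Hom P E) (x : X) : p (c x) = gone.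
Proof. exact (HX (comp c p) x). Qed.

Lemma no_homs_sub (X N E : Grp) (i : Hom N E) :
  injective_hom i -> only_trivial_homs X E -> only_trivial_homs X N.
Proof.
  intros Hi HX phi x. apply Hi. rewrite hom_one. exact (no_homs_comp HX phi i x).
Qed.

Lemma kernel_factor (K G Q X : Grp) (k : Hom K G) (g : Hom G Q) (Hk : is_kernel k g)
  (c : Hom X G) : (forall x, g (c x) = gone) -> exists d : Hom X K, forall x, k (d x) = c x.
Proof.
  intro Hc. destruct Hk as [Hi Hker].
  assert (C : forall x, {w | k w = c x})
    by (intro x; apply constructive_indefinite_description, Hker, Hc).
  assert (Hm : forall y1 y2,
    proj1_sig (C (gmul y1 y2)) = gmul (proj1_sig (C y1)) (proj1_sig (C y2))).
  { intros. apply Hi. rewrite hmul, !(proj2_sig (C _)). apply hmul. }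
  exists (MkHom X K (fun y => proj1_sig (C y)) Hm). intro x. apply (proj2_sig (C _)).
Qed.

Lemma sig_eq (X : Type) (Pr : X -> Prop) (u v : sig Pr) : proj1_sig u = proj1_sig v -> u = v.
Proof. destruct u, v; simpl; intro; subst. f_equal. apply proof_irrelevance. Qed.

Section Product.
Variables G H : Grp.

Definition pmul (u v : G * H) : G * H := (gmul (fst u) (fst v), gmul (snd u) (snd v)).
Definition pinv (u : G * H) : G * H := (ginv (fst u), ginv (snd u)).

Definition prodG : Grp.
Proof.
  refine (@MkGrp (G * H)%type pmul pinv (gone, gone) _ _ _ _ _);
  intros; unfold pmul, pinv; destruct x; try destruct y; try destruct z; simpl;
  now rewrite ?gmulA, ?gmul1l, ?gmul1r, ?gmulVl, ?gmulVr.
Defined.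

Definition pfst : Hom prodG G := MkHom prodG G (fun u => fst u) (fun x y => eq_refl).
Definition psnd : Hom prodG H := MkHom prodG H (fun u => snd u) (fun x y => eq_refl).
End Product.

Section Equalizer.
Variables X Y : Grp.
Variables phi psi : Hom X Y.

Definition ecar := {x : X | phi x = psi x}.

Lemma emul_pf (u v : ecar) :
  phi (gmul (proj1_sig u) (proj1_sig v)) = psi (gmul (proj1_sig u) (proj1_sig v)).
Proof. now rewrite !hmul, (proj2_sig u), (proj2_sig v). Qed.

Lemma einv_pf (u : ecar) : phi (ginv (proj1_sig u)) = psi (ginv (proj1_sig u)).
Proof. now rewrite !hom_inv, (proj2_sig u). Qed.

Lemma eone_pf : phi gone = psi gone.
Proof. now rewrite !hom_one. Qed.

Definition eqzG : Grp.
Proof.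
  refine (@MkGrp ecar (fun u v => exist _ _ (emul_pf u v)) (fun u => exist _ _ (einv_pf u))
            (exist _ _ eone_pf) _ _ _ _ _);
  intros; apply sig_eq; simpl.
  - apply gmulA.
  - apply gmul1l.
  - apply gmul1r.
  - apply gmulVl.
  - apply gmulVr.
Defined.

Definition incl : Hom eqzG X := MkHom eqzG X (fun u => proj1_sig u) (fun x y => eq_refl).

Lemma incl_injective : injective_hom incl.
Proof. intros u v H. now apply sig_eq. Qed.
End Equalizer.

Definition kerG (E Q : Grp) (p : Hom E Q) : Grp := eqzG p (triv E Q).
Definition ker_incl (E Q : Grp) (p : Hom E Q) : Hom (kerG p) E := incl p (triv E Q).

Lemma kernel_short_exact (E Q : Grp) (p : Hom E Q) :
  surjective_hom p -> short_exact (ker_incl p) p.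
Proof.
  intro Hp. split; [apply incl_injective | split; [exact Hp|]].
  intro y. split.
  - intro Hy. exists (exist _ y Hy : kerG p). reflexivity.
  - intros [x <-]. exact (proj2_sig x).
Qed.

Section PullbackConstruction.
Variables E G Q : Grp.
Variables (pi : Hom E Q) (g : Hom G Q).

Definition pbG : Grp := eqzG (comp (pfst E G) pi) (comp (psnd E G) g).
Definition pq1 : Hom pbG E := comp (incl _ _) (pfst E G).
Definition pq2 : Hom pbG G := comp (incl _ _) (psnd E G).

Lemma canonical_pullback : is_pullback pi g pq1 pq2.
Proof.
  split; [intro x; exact (proj2_sig x)|].
  intros Z a b Hab. split.
  - assert (Hp : forall z, (comp (pfst E G) pi) ((a z, b z) : prodG E G)
                            = (comp (psnd E G) g) ((a z, b z) : prodG E G))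
      by (intro; apply Hab).
    assert (Hm : forall z1 z2, (exist _ _ (Hp (gmul z1 z2)) : pbG)
                                = gmul (exist _ _ (Hp z1) : pbG) (exist _ _ (Hp z2))).
    { intros. apply sig_eq. simpl. unfold pmul. simpl. now rewrite !hmul. }
    exists (MkHom Z pbG (fun z => exist _ _ (Hp z)) Hm). intro x. simpl. auto.
  - intros h1 h2 H1 H2 x. apply sig_eq.
    destruct (H1 x) as [A1 B1], (H2 x) as [A2 B2]. simpl in *.
    transitivity ((a x, b x) : prodG E G).
    + rewrite <- A1, <- B1. apply surjective_pairing.
    + rewrite <- A2, <- B2. symmetry. apply surjective_pairing.
Qed.
End PullbackConstruction.

Section PullbackFacts.
Variables (E Q G P : Grp) (pi : Hom E Q) (g : Hom G Q) (p1 : Hom P E) (p2 : Hom P G).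
Hypothesis Hpb : is_pullback pi g p1 p2.

Lemma pullback_ext (X : Grp) (h1 h2 : Hom X P) :
  (forall x, p1 (h1 x) = p1 (h2 x)) -> (forall x, p2 (h1 x) = p2 (h2 x)) ->
  forall x, h1 x = h2 x.
Proof.
  intros H1 H2. destruct Hpb as [Hc Hu].
  assert (Hcc : forall x, pi (comp h1 p1 x) = g (comp h1 p2 x)) by (intro; apply Hc).
  apply (proj2 (Hu X _ _ Hcc)); intro x; simpl; auto.
Qed.

(* Observation 2, injectivity: each x in ker g yields the element (1, x) of P, so if
   the points of P over 1 in E all lie over 1 in G, then ker g is trivial. *)
Lemma pullback_injective :
  (forall z, p1 z = gone -> p2 z = gone) -> injective_hom g.
Proof.
  intro Hfib. apply injective_of_trivial_kernel. intros x Hx.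
  assert (Hc : forall w : kerG g, pi (triv (kerG g) E w) = g (ker_incl g w)).
  { intro w. simpl. rewrite hom_one. symmetry. exact (proj2_sig w). }
  destruct (proj1 (proj2 Hpb _ _ _ Hc)) as [h Hh].
  destruct (Hh (exist _ x Hx)) as [H1 H2]. simpl in H1, H2.
  rewrite <- H2. apply Hfib, H1.
Qed.

Lemma pullback_surjective :
  surjective_hom pi -> surjective_hom p1 -> surjective_hom g.
Proof.
  intros Hpi Hp1 y. destruct (Hpi y) as [e <-]. destruct (Hp1 e) as [z <-].
  exists (p2 z). symmetry. apply (proj1 Hpb).
Qed.

Variables (K : Grp) (k : Hom K G).
Hypothesis Hk : is_kernel k g.

Lemma pullback_kernel_lift : exists h0 : Hom K P, forall w, p1 (h0 w) = gone /\ p2 (h0 w) = k w.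
Proof.
  assert (Hc : forall w, pi (triv K E w) = g (k w)).
  { intro w. simpl. rewrite hom_one. symmetry. apply (proj2 Hk). eauto. }
  destruct (proj1 (proj2 Hpb K _ _ Hc)) as [h0 Hh0]. now exists h0.
Qed.

Lemma pullback_factor_kernel (X : Grp) (HX : only_trivial_homs X E) (c : Hom X P) :
  exists d : Hom X K, forall x, k (d x) = p2 (c x).
Proof.
  apply (kernel_factor Hk (comp c p2)). intro x. simpl.
  rewrite <- (proj1 Hpb), (no_homs_comp HX c p1 x). apply hom_one.
Qed.

Lemma pullback_local (A B : Grp) (f : Hom A B) (HK : is_local f K)
  (HAE : only_trivial_homs A E) (HBE : only_trivial_homs B E) : is_local f P.
Proof.
  destruct pullback_kernel_lift as [h0 Hh0]. split.
  - intros phi psi Hag. apply pullback_ext.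
    + intro b. now rewrite (no_homs_comp HBE phi p1), (no_homs_comp HBE psi p1).
    + destruct (pullback_factor_kernel HBE phi) as [d1 Hd1].
      destruct (pullback_factor_kernel HBE psi) as [d2 Hd2].
      intro b. rewrite <- Hd1, <- Hd2. f_equal.
      apply (proj1 HK). intro a. apply (proj1 Hk). now rewrite Hd1, Hd2, Hag.
  - intro chi. destruct (pullback_factor_kernel HAE chi) as [d Hd].
    destruct (proj2 HK d) as [phi0 Hphi0]. exists (comp phi0 h0).
    apply (pullback_ext (comp f (comp phi0 h0)) chi).
    + intro a. simpl. rewrite (proj1 (Hh0 _)). symmetry. exact (no_homs_comp HAE chi p1 a).
    + intro a. simpl. rewrite (proj2 (Hh0 _)), Hphi0. apply Hd.
Qed.
End PullbackFacts.

Lemma local_of_no_homs (A B : Grp) (f : Hom A B) (M : Grp) :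
  only_trivial_homs A M -> only_trivial_homs B M -> is_local f M.
Proof.
  intros HA HB. split.
  - intros phi psi _ b. now rewrite (HB phi), (HB psi).
  - intro chi. exists (triv B M). intro a. simpl. now rewrite (HA chi).
Qed.

Lemma local_localization_bijective (A B : Grp) (f : Hom A B) (M LM : Grp) (e : Hom M LM) :
  is_local f M -> is_localization f e -> injective_hom e /\ surjective_hom e.
Proof.
  intros HM [HLM Hu].
  destruct (proj1 (Hu M HM (idh M))) as [r Hr]. simpl in Hr.
  assert (Hsec : forall y, e (r y) = y).
  { apply (proj2 (Hu LM HLM e) (comp r e) (idh LM)). intro x. simpl. now rewrite Hr. }
  split.
  - intros x y Hxy. now rewrite <- (Hr x), <- (Hr y), Hxy.
  - intro y. now exists (r y).
Qed.

Lemma short_exact_transport (N E Q N' E' Q' : Grp) (i : Hom N E) (p : Hom E Q)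
  (i' : Hom N' E') (p' : Hom E' Q') (aN : Hom N N') (aE : Hom E E') (aQ : Hom Q Q') :
  (forall x, i' (aN x) = aE (i x)) -> (forall y, p' (aE y) = aQ (p y)) ->
  surjective_hom aN -> injective_hom aE -> surjective_hom aE ->
  injective_hom aQ -> surjective_hom aQ ->
  short_exact i p -> short_exact i' p'.
Proof.
  intros Hi Hp HNs HEi HEs HQi HQs [Hinj [Hsurj Hex]]. split; [|split].
  - intros u v Huv. destruct (HNs u) as [x <-], (HNs v) as [y <-].
    rewrite !Hi in Huv. apply HEi, Hinj in Huv. now subst.
  - intro y'. destruct (HQs y') as [y <-]. destruct (Hsurj y) as [e <-].
    exists (aE e). apply Hp.
  - intro y'. destruct (HEs y') as [y <-]. rewrite Hp. split.
    + intro Hy. rewrite <- (hom_one aQ) in Hy. apply HQi, Hex in Hy.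
      destruct Hy as [x <-]. exists (aN x). apply Hi.
    + intros [x' Hx']. destruct (HNs x') as [x <-]. rewrite Hi in Hx'.
      apply HEi in Hx'. rewrite <- (hom_one aQ). f_equal. apply Hex. eauto.
Qed.

Section LocalizationFunctor.
Variables (A B : Grp) (f : Hom A B).
Variables (L : Grp -> Grp) (eta : forall G : Grp, Hom G (L G))
          (Lmap : forall G H : Grp, Hom G H -> Hom (L G) (L H)).
Hypothesis HL : is_localization_functor f L eta Lmap.

Lemma local_eta_bijective (M : Grp) :
  is_local f M -> injective_hom (eta M) /\ surjective_hom (eta M).
Proof. intro HM. exact (local_localization_bijective HM (proj1 HL M)). Qed.

Lemma local_extension_flat (N E Q : Grp) (i : Hom N E) (p : Hom E Q) :
  is_local f N -> is_local f E -> is_local f Q -> short_exact i p -> L_flat L Lmap i p.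
Proof.
  intros HN HE HQ Hse. split; [exact Hse|].
  destruct (local_eta_bijective HN) as [_ HNs], (local_eta_bijective HE) as [HEi HEs],
    (local_eta_bijective HQ) as [HQi HQs].
  apply (@short_exact_transport _ _ _ _ _ _ i p _ _ (eta N) (eta E) (eta Q)); auto;
    intro; apply (proj2 HL).
Qed.

Lemma localized_fiber_trivial (N P G : Grp) (i : Hom N P) (q : Hom P G) :
  is_local f N -> is_local f P -> (forall n, q (i n) = gone) ->
  short_exact (@Lmap N P i) (@Lmap P G q) ->
  forall z, eta G (q z) = gone -> q z = gone.
Proof.
  intros HN HP Hqi [_ [_ Hex]] z Hz.
  destruct (local_eta_bijective HN) as [_ HNs], (local_eta_bijective HP) as [HPi _].
  assert (Hker : @Lmap P G q (eta P z) = gone) by now rewrite (proj2 HL).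
  destruct (proj1 (Hex _) Hker) as [n' Hn']. destruct (HNs n') as [n <-].
  rewrite (proj2 HL) in Hn'. apply HPi in Hn'. rewrite <- Hn'. apply Hqi.
Qed.

Lemma localized_image (P G : Grp) (q : Hom P G) :
  is_local f P -> surjective_hom (@Lmap P G q) -> forall y, exists z, eta G (q z) = y.
Proof.
  intros HP Hs y. destruct (Hs y) as [w <-].
  destruct (proj2 (local_eta_bijective HP) w) as [z <-].
  exists z. symmetry. apply (proj2 HL).
Qed.
End LocalizationFunctor.

Theorem proposition4p4
  (A B : Grp) (f : Hom A B)
  (L : Grp -> Grp) (eta : forall G : Grp, Hom G (L G))
  (Lmap : forall G H : Grp, Hom G H -> Hom (L G) (L H))
  (HL : is_localization_functor f L eta Lmap)
  (G : Grp)
  (HGnot : ~ is_iso (eta G))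
  (HGker : exists (K : Grp) (k : Hom K G), is_kernel k (eta G) /\ is_local f K)
  (E : Grp) (HE : is_local f E)
  (pi : Hom E (L G)) (Hpi : surjective_hom pi)
  (HAE : only_trivial_homs A E) (HBE : only_trivial_homs B E) :
  (forall (P : Grp) (p1 : Hom P E) (p2 : Hom P G),
      is_pullback pi (eta G) p1 p2 ->
      is_local f P /\ ~ is_localization f p1)
  /\ ~ conditionally_flat L Lmap.
Proof.
  destruct HGker as [K [k [Hk HK]]]. split.
  - intros P p1 p2 Hpb.
    assert (HP : is_local f P) by exact (pullback_local Hpb Hk HK HAE HBE).
    split; [exact HP|]. intro Hp1.
    destruct (local_localization_bijective HP Hp1) as [Hinj Hsurj].
    apply HGnot, bijective_is_iso.
    + apply (pullback_injective Hpb). intros z Hz.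
      rewrite <- (hom_one p1) in Hz. apply Hinj in Hz. subst. apply hom_one.
    + exact (pullback_surjective Hpb Hpi Hsurj).
  - intro Hcf.
    (* the extension ker pi -> E -> LG of local groups is L-flat *)
    pose proof (kernel_short_exact Hpi) as Hse.
    assert (HN : is_local f (kerG pi))
      by (apply local_of_no_homs; apply (no_homs_sub (proj1 Hse)); assumption).
    assert (Hflat := local_extension_flat HL HN HE (proj1 (proj1 HL G)) Hse).
    (* its pullback along eta_G, with ker pi embedded as n |-> (n, 1) *)
    pose proof (canonical_pullback pi (eta G)) as Hpb.
    assert (Hc : forall n, pi (ker_incl pi n) = eta G (triv (kerG pi) G n)).
    { intro n. simpl. rewrite hom_one. exact (proj2_sig n). }
    destruct (proj1 (proj2 Hpb _ _ _ Hc)) as [i' Hi'].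
    assert (HP := pullback_local Hpb Hk HK HAE HBE).
    destruct (Hcf _ _ _ _ _ Hflat G (eta G) _ _ _ i' Hpb
                (fun n => proj1 (Hi' n)) (fun n => proj2 (Hi' n))) as [_ HLse].
    apply HGnot, bijective_is_iso.
    + apply (pullback_injective Hpb). intros z Hz.
      apply (localized_fiber_trivial HL i' _ HN HP (fun n => proj2 (Hi' n)) HLse).
      rewrite <- (proj1 Hpb), Hz. apply hom_one.
    + intro y. destruct (localized_image HL _ HP (proj1 (proj2 HLse)) y) as [z Hz]. eauto.
Qed.
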